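(* Let $\mathbb{0}=\{x\in\omega^\omega : x(n)=0 \text{ for all but finitely many } n\}$. Then every maximal antichain of $(\omega^\omega\setminus\mathbb{0},\le^* )$ has size $\mathfrak{c}$; i.e. $\mathfrak{mac}(\omega^\omega\setminus\mathbb{0},\le^* )=\mathfrak{c}$.
   Context: For $x,y\in\omega^\omega$, $x\le^* y$ means $x(n)\le y(n)$ for all but finitely many $n$. For a poset (or preorder) $(P,\le)$, an antichain is a subset whose elements are pairwise incomparable (neither $p\le q$ nor $q\le p$ for distinct members), and $\mathfrak{mac}(P)$ is the minimal cardinality of a maximal (with respect to inclusion) antichain of $P$. $\mathfrak{c}=2^{\aleph_0}$. *)

From mathcomp Require Import all_boot all_order.
From mathcomp Require Import boolp classical_sets cardinality.
Set Implicit Arguments. Unset Strict Implicit. Unset Printing Implicit Defensive.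
Local Open Scope classical_set_scope.

Definition le_star (x y : nat -> nat) : Prop :=
  exists N : nat, forall n, (N <= n)%N -> (x n <= y n)%N.

Definition eventually_zero (x : nat -> nat) : Prop :=
  exists N : nat, forall n, (N <= n)%N -> x n = 0%N.

Definition Pset : set (nat -> nat) := [set x | ~ eventually_zero x].

Definition antichain {T} (le : T -> T -> Prop) (P A : set T) : Prop :=
  A `<=` P /\
  forall x y, A x -> A y -> x <> y -> ~ le x y /\ ~ le y x.

Definition maximal_antichain {T} (le : T -> T -> Prop) (P A : set T) : Prop :=
  antichain le P A /\
  forall B, antichain le P B -> A `<=` B -> B = A.

From mathcomp Require Import all_boot all_order.
From mathcomp Require Import boolp classical_sets cardinality.
From mathcomp Require Import zify.
Set Implicit Arguments. Unset Strict Implicit. Unset Printing Implicit Defensive.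
Local Open Scope classical_set_scope.
Local Open Scope card_scope.

(* The upper bound is trivial: a sequence of naturals is determined by its
   graph, a subset of nat * nat, hence A #<= 2^omega.
   For the lower bound fix a in A (a is not eventually zero).  To every
   f : nat -> bool we attach a perturbation y_f of a: number the positions
   where a is nonzero, and use the prefix codes code f j (the binary numerals
   1 f(0) ... f(j-1)) to select, along this numbering, infinitely many
   positions where y_f drops to 0 and infinitely many where y_f exceeds a.
   Prefix codes of distinct f and g share only finitely many values, so for
   f <> g the perturbations are <=*-incomparable, min(y_f, y_g) <=* a and
   a <=* max(y_f, y_g).  By maximality each y_f is comparable with some
   F f in A; these facts force F to be injective, since a common value b
   would either be comparable to a (hence equal to a, which is comparable to
   no y_f) or sit between y_f and y_g.  Cantor-Bernstein concludes. *)

Lemma le_star_refl x : le_star x x.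
Proof. by exists 0. Qed.

Lemma le_star_trans x y z : le_star x y -> le_star y z -> le_star x z.
Proof.
move=> [N1 le_xy] [N2 le_yz]; exists (maxn N1 N2) => n.
rewrite geq_max => /andP[n1 n2]; exact: leq_trans (le_xy n n1) (le_yz n n2).
Qed.

Lemma le_star_minn b y z :
  le_star b y -> le_star b z -> le_star b (fun n => minn (y n) (z n)).
Proof.
move=> [N1 le_by] [N2 le_bz]; exists (maxn N1 N2) => n.
by rewrite geq_max leq_min => /andP[n1 n2]; rewrite le_by ?le_bz.
Qed.

Lemma le_star_maxn b y z :
  le_star y b -> le_star z b -> le_star (fun n => maxn (y n) (z n)) b.
Proof.
move=> [N1 le_yb] [N2 le_zb]; exists (maxn N1 N2) => n.
by rewrite !geq_max => /andP[n1 n2]; rewrite le_yb ?le_zb.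
Qed.

Lemma antichain_le_eq T (le : T -> T -> Prop) (P A : set T) a b :
  antichain le P A -> A a -> A b -> le a b -> a = b.
Proof. by move=> [_ anti] Aa Ab le_ab; apply: contrapT => /(anti a b Aa Ab) []. Qed.

Lemma maximal_antichain_comparable T (le : T -> T -> Prop) (P A : set T) x :
  (forall y, le y y) -> maximal_antichain le P A -> P x ->
  exists b, A b /\ (le b x \/ le x b).
Proof.
move=> le_refl [[AP anti] maxA] Px; apply: contrapT => incomp.
have anti_Ax : antichain le P (A `|` [set x]).
  split=> [z [/AP|->] //|u v [Au|->] [Av|->] uv].
  - exact: anti.
  - by split=> le_uv; apply: incomp; exists u; split=> //; [left|right].
  - by split=> le_xv; apply: incomp; exists v; split=> //; [right|left].
  - by case: uv.
have Ax : A x by rewrite -(maxA _ anti_Ax (@subsetUl _ A [set x])); right.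
by apply: incomp; exists x; split=> //; left.
Qed.

(* A sequence of naturals is determined by its graph, so there are at most
   continuum many of them. *)
Lemma card_le_bool_seq (A : set (nat -> nat)) : A #<= [set: nat -> bool].
Proof.
apply/pcard_injP.
exists (fun x m => if (unpickle m : option (nat * nat)) is Some (i, j)
                   then x i == j else false).
move=> x y _ _ graph_xy; apply: funext => i.
have := congr1 (fun h => h (pickle (i, x i))) graph_xy.
by rewrite /= pickleK eqxx => /esym/eqP.
Qed.

(* code f k is the numeral with binary digits 1 f(0) ... f(k-1). *)
Fixpoint code (f : nat -> bool) (k : nat) : nat :=
  if k is k'.+1 then 2 * code f k' + f k' else 1.

Lemma code_bounds f k : 2 ^ k <= code f k < 2 ^ k.+1.
Proof.
elim: k => [|k /andP[lo hi]] //=; rewrite !expnS in hi *.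
by apply/andP; case: (f k) => /=; split; lia.
Qed.

Lemma code_length f g k j : code f k = code g j -> k = j.
Proof.
move=> E; rewrite -(trunc_log_eq (isT : 1 < 2) (code_bounds f k)) E.
exact: trunc_log_eq (code_bounds g j).
Qed.

Lemma code_prefix f g k : code f k = code g k -> forall i, i < k -> f i = g i.
Proof.
elim: k => [|k IH] //= E i.
have [E1 E2] : code f k = code g k /\ f k = g k.
  by move: E; case: (f k); case: (g k) => /=; lia.
by rewrite ltnS leq_eqVlt => /orP[/eqP->|]; last exact: IH.
Qed.

Lemma code_gt f k : k < code f k.
Proof. have := code_bounds f k; have := ltn_expl k (isT : 1 < 2); lia. Qed.

Lemma shared_codes_bounded f g :
  f <> g -> exists B, forall j j', code f j = code g j' -> code f j < B.
Proof.
move=> fg; have [i fgi] : exists i, f i <> g i.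
  by apply/existsNP => feqg; apply: fg; exact: funext.
exists (2 ^ i.+1) => j j' E; have jj := code_length E; subst j'.
have [ij|ji] := ltnP i j; first by case: fgi; exact: code_prefix E _ ij.
have := code_bounds f j; have : 2 ^ j.+1 <= 2 ^ i.+1 by rewrite leq_pexp2l.
lia.
Qed.

Section Perturbation.
Variable a : nat -> nat.
Hypothesis a_nz : ~ eventually_zero a.

(* rank n is the number of positions m < n where a m is nonzero; it enumerates
   the support of a. *)
Fixpoint rank (n : nat) : nat := if n is n'.+1 then rank n' + (0 < a n') else 0.

Lemma rank_mono m n : m <= n -> rank m <= rank n.
Proof.
elim: n => [|n IH]; first by rewrite leqn0 => /eqP->.
by rewrite leq_eqVlt => /orP[/eqP->//|]; rewrite ltnS => /IH /=; lia.
Qed.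

Lemma rank_unbounded B : exists n, B <= rank n.
Proof.
elim: B => [|B [n Hn]]; first by exists 0.
have [m [nm am]] : exists m, n <= m /\ a m <> 0.
  apply: contra_notP a_nz => none; exists n => k kn.
  by apply: contra_notP none => ak; exists k.
exists m.+1 => /=; have := rank_mono nm; move: am; case: (a m) => //= *; lia.
Qed.

Lemma rank_eventually_ge B : exists M, forall n, M <= n -> B <= rank n.
Proof.
have [M HM] := rank_unbounded B; exists M => n Mn.
exact: leq_trans HM (rank_mono Mn).
Qed.

Lemma rank_hit n k : k < rank n -> exists m, m < n /\ 0 < a m /\ rank m = k.
Proof.
elim: n => [|n IH] //= kn; have [lt|ge] := ltnP k (rank n).
  by have [m [? ?]] := IH lt; exists m; split => //; lia.
by exists n; move: kn; case: (ltnP 0 (a n)) => /= an kn; lia.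
Qed.

Lemma rank_attained k M : rank M < k -> exists m, M <= m /\ 0 < a m /\ rank m = k.
Proof.
move=> Mk; have [n Hn] := rank_unbounded k.+1.
have [m [_ [am rm]]] := rank_hit Hn; exists m; split => //.
by have [//|mM] := leqP M m; have := rank_mono (ltnW mM); lia.
Qed.

Definition lowered f n := exists j, rank n = 2 * code f j.
Definition raised f n := exists j, rank n = (2 * code f j).+1.

Definition perturb f n : nat :=
  if `[< lowered f n >] then 0 else if `[< raised f n >] then (a n).+1 else a n.

Lemma perturb_raised f n : raised f n -> perturb f n = (a n).+1.
Proof.
move=> [j rj]; rewrite /perturb; case: asboolP => [[k rk]|_]; first lia.
by case: asboolP => // [[]]; exists j.
Qed.

Lemma perturb_lowered f n : lowered f n -> perturb f n = 0.
Proof. by move=> low; rewrite /perturb; case: asboolP. Qed.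

Lemma perturb_le f n : ~ raised f n -> perturb f n <= a n.
Proof. by move=> nr; rewrite /perturb; case: asboolP => // _; case: asboolP. Qed.

Lemma perturb_ge f n : ~ lowered f n -> a n <= perturb f n.
Proof. by move=> nl; rewrite /perturb; case: asboolP => // _; case: asboolP. Qed.

Lemma raised_infinitely f M : exists n, M <= n /\ raised f n.
Proof.
have code_large := code_gt f (rank M).
have [m [Mm [_ rm]]] := rank_attained (k := (2 * code f (rank M)).+1) (M := M) ltac:(lia).
by exists m; split => //; exists (rank M).
Qed.

Lemma lowered_infinitely f M : exists n, M <= n /\ 0 < a n /\ lowered f n.
Proof.
have code_large := code_gt f (rank M).
have [m [Mm [am rm]]] := rank_attained (k := 2 * code f (rank M)) (M := M) ltac:(lia).
by exists m; do 2!split => //; exists (rank M).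
Qed.

Lemma perturb_separated f g : f <> g -> exists M, forall n, M <= n ->
  ~ (raised f n /\ raised g n) /\ ~ (lowered f n /\ lowered g n).
Proof.
move=> /shared_codes_bounded [B shared]; have [M HM] := rank_eventually_ge (2 * B).+2.
exists M => n /HM large; split=> [[[j rj] [k rk]]|[[j rj] [k rk]]];
  by have := shared j k ltac:(lia); lia.
Qed.

Lemma perturb_in_Pset f : Pset (perturb f).
Proof.
move=> [N zero]; have [n [Nn rn]] := raised_infinitely f N.
by have := zero n Nn; rewrite perturb_raised.
Qed.

Lemma perturb_not_le f g : f <> g -> ~ le_star (perturb g) (perturb f).
Proof.
move=> /perturb_separated [M sep] [N le_gf].
have [n [Hn rg]] := raised_infinitely g (maxn M N).
have nrf : ~ raised f n by move=> rf; apply: (sep n ltac:(lia)).1.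
by have := le_gf n ltac:(lia); rewrite (perturb_raised rg); have := perturb_le nrf; lia.
Qed.

Lemma a_not_le_perturb f : ~ le_star a (perturb f).
Proof.
move=> [N le_af]; have [n [Nn [an lf]]] := lowered_infinitely f N.
by have := le_af n Nn; rewrite perturb_lowered //; lia.
Qed.

Lemma perturb_not_le_a f : ~ le_star (perturb f) a.
Proof.
move=> [N le_fa]; have [n [Nn rf]] := raised_infinitely f N.
by have := le_fa n Nn; rewrite perturb_raised //; lia.
Qed.

Lemma minn_perturb_le_a f g :
  f <> g -> le_star (fun n => minn (perturb f n) (perturb g n)) a.
Proof.
move=> /perturb_separated [M sep]; exists M => n /sep [nrr _].
rewrite geq_min; case: (pselect (raised f n)) => rf.
  have nrg : ~ raised g n by move=> rg; apply: nrr.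
  by rewrite (perturb_le nrg) orbT.
by rewrite (perturb_le rf).
Qed.

Lemma a_le_maxn_perturb f g :
  f <> g -> le_star a (fun n => maxn (perturb f n) (perturb g n)).
Proof.
move=> /perturb_separated [M sep]; exists M => n /sep [_ nll].
rewrite leq_max; case: (pselect (lowered f n)) => lf.
  have nlg : ~ lowered g n by move=> lg; apply: nll.
  by rewrite (perturb_ge nlg) orbT.
by rewrite (perturb_ge lf).
Qed.

Lemma comparable_perturb_eq (A : set (nat -> nat)) b f g :
  antichain le_star Pset A -> A a -> A b ->
  (le_star b (perturb f) \/ le_star (perturb f) b) ->
  (le_star b (perturb g) \/ le_star (perturb g) b) -> f = g.
Proof.
move=> antiA Aa Ab cmp_f cmp_g; apply: contrapT => fg.
case: cmp_f cmp_g => [bf|fb] [bg|gb].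
- have ba : le_star b a := le_star_trans (le_star_minn bf bg) (minn_perturb_le_a fg).
  by move: bf; rewrite (antichain_le_eq antiA Ab Aa ba); apply: a_not_le_perturb.
- exact: perturb_not_le fg (le_star_trans gb bf).
- by apply: perturb_not_le (le_star_trans fb bg) => gf; apply: fg.
- have ab : le_star a b := le_star_trans (a_le_maxn_perturb fg) (le_star_maxn fb gb).
  by move: fb; rewrite -(antichain_le_eq antiA Aa Ab ab); apply: perturb_not_le_a.
Qed.

End Perturbation.

Theorem mainTheorem3 (A : set (nat -> nat)) :
  maximal_antichain le_star Pset A -> A #= [set: nat -> bool].
Proof.
move=> maxA; have antiA := maxA.1.
have one_in_Pset : Pset (fun=> 1) by move=> [N one0]; have := one0 N (leqnn N).
have [a [Aa _]] := maximal_antichain_comparable le_star_refl maxA one_in_Pset.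
have a_nz : ~ eventually_zero a := antiA.1 a Aa.
have [F HF] := choice (fun f : nat -> bool => maximal_antichain_comparable le_star_refl maxA
                                  (perturb_in_Pset a_nz (f := f))).
apply: Cantor_Bernstein; first exact: card_le_bool_seq.
apply/pcard_leP/injfunPex; exists F => [f _|f g _ _ Ffg]; first exact: (HF f).1.
have cmp_g := (HF g).2; rewrite -Ffg in cmp_g.
exact: (comparable_perturb_eq a_nz antiA Aa (HF f).1 (HF f).2 cmp_g).
Qed.
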